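(* Let $S$ be a finite set of size $n$ and let $\mathcal{X}_{\mathrm{Ab}}=\{*:S\times S\to S\mid (S,* )\text{ is an abelian group}\}$. Then there exists a query-algorithm with respect to $\mathcal{X}_{\mathrm{Ab}}$ which solves product-recovering and uses at most $n$ queries for every $*\in\mathcal{X}_{\mathrm{Ab}}$ (i.e. every leaf has depth at most $n$).
   Context: Let $S$ be a finite set and $\mathcal{X}$ a set of binary operations $*:S\times S\to S$. A query-algorithm with respect to $\mathcal{X}$ is a rooted tree $T$ in which every non-leaf node $v$ is labeled by a pair $(x_v,y_v)\in S^2$ (the query ''$x_v*y_v$''), leaves are unlabeled, and every edge from $v$ to a child is labeled by an element of $S$ (a possible answer), distinct edges leaving the same node having distinct labels. It is required that for every $*\in\mathcal{X}$ there is a path $(v_0,\dots,v_k)$ from the root $v_0$ to a leaf $v_k$ such that for each $0\le i<k$ the edge $(v_i,v_{i+1})$ is labeled $x_{v_i}*y_{v_i}$. This leaf is uniquely determined and is denoted $L( * )$, giving a map $L:\mathcal{X}\to\{\text{leaves of }T\}$. The query-algorithm solves product-recovering if $L$ is a bijection. The number of queries used on $*$ is the depth of $L( * )$. *)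

From mathcomp Require Import all_boot.
Set Implicit Arguments. Unset Strict Implicit. Unset Printing Implicit Defensive.

(* A non-leaf node is labeled by a
   query (x, y) and its outgoing edges are given by a partial function
   S -> option qtree: the child reached along the edge labeled a (if any).
   Distinct edges leaving a node automatically have distinct labels. *)
Inductive qtree (S : Type) : Type :=
| Leaf : qtree S
| Node : S -> S -> (S -> option (qtree S)) -> qtree S.
Arguments Leaf {S}.

(* Well-formedness: a labeled (non-leaf) node has at least one child
   (a node with no children is a leaf, hence unlabeled). *)
Fixpoint qwf (S : Type) (t : qtree S) : Prop :=
  match t with
  | Leaf => True
  | Node _ _ f =>
      (exists a, f a <> None) /\
      (forall a, match f a with Some t' => qwf t' | None => True end)
  end.

(* Leaves are identified by the sequence of edge labels from the root. *)
Fixpoint is_leaf_path (S : Type) (t : qtree S) (p : seq S) : Prop :=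
  match t, p with
  | Leaf, [::] => True
  | Node _ _ f, a :: p' =>
      match f a with Some t' => is_leaf_path t' p' | None => False end
  | _, _ => False
  end.

Fixpoint follow (S : Type) (t : qtree S) (op : S -> S -> S) : option (seq S) :=
  match t with
  | Leaf => Some [::]
  | Node x y f =>
      match f (op x y) with
      | Some t' => omap (cons (op x y)) (follow t' op)
      | None => None
      end
  end.

(* The tree is a query-algorithm w.r.t. X solving product-recovering:
   every op in X reaches a leaf, and L : X -> leaves is a bijection. *)
Definition solves_product_recovering (S : Type) (X : (S -> S -> S) -> Prop)
    (t : qtree S) : Prop :=
  qwf t /\
  (forall op, X op -> exists p, follow t op = Some p) /\
  (forall op1 op2 p, X op1 -> X op2 ->
      follow t op1 = Some p -> follow t op2 = Some p -> op1 =2 op2) /\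
  (forall p, is_leaf_path t p -> exists2 op, X op & follow t op = Some p).

Definition is_abelian_group (S : Type) (op : S -> S -> S) : Prop :=
  associative op /\ commutative op /\
  exists e : S, left_id e op /\ forall x, exists y, op y x = e.

From mathcomp Require Import all_boot.
From Stdlib Require Import ClassicalEpsilon.
Set Implicit Arguments. Unset Strict Implicit. Unset Printing Implicit Defensive.

(* The strategy builds up a set L of elements whose products are known.
   First it computes the powers x, x^2, ... of an arbitrary x until some
   power is already in L; then L = <x> and the last power is the unit e.
   Then, while L <> S, it picks y outside the subgroup H = L and enumerates
   the cosets yH, y^2H, ... by the queries h * y^j (h in H, h <> e) and
   y * y^j, until y^(i+1) falls back into L; then L = H<y> is a subgroup.
   Each query but the one closing a phase adds a new element to L, and each
   closing is paid for by the generator y entering L for free: at most |S|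
   queries.  For correctness we run the strategy on two abelian groups op and
   op' answering identically and keep track of the products h * y^j on which
   op' is known to agree with op; whenever a phase closes, op and op' agree
   on the subgroup L ([agree_closed]), so they are equal once L = S. *)

Section QueryStrategy.
Variables (S St : Type) (query : St -> option (S * S)) (update : St -> S -> St).

Fixpoint strategy_tree (fuel : nat) (s : St) (C : (S -> S -> S) -> Prop) : qtree S :=
  match fuel with
  | 0 => Leaf
  | fuel'.+1 =>
    if query s is Some (x, y) then
      Node x y (fun a =>
        if excluded_middle_informative (exists op, C op /\ op x y = a)
        then Some (strategy_tree fuel' (update s a) (fun op => C op /\ op x y = a))
        else None)
    else Leaf
  end.

Fixpoint transcript (op : S -> S -> S) (fuel : nat) (s : St) : seq S :=
  match fuel with
  | 0 => [::]
  | fuel'.+1 =>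
    if query s is Some (x, y) then op x y :: transcript op fuel' (update s (op x y))
    else [::]
  end.

Lemma transcript_cons op fuel s x y : query s = Some (x, y) ->
  transcript op fuel.+1 s = op x y :: transcript op fuel (update s (op x y)).
Proof. by move=> /= ->. Qed.

Lemma follow_strategy_tree fuel s C op :
  C op -> follow (strategy_tree fuel s C) op = Some (transcript op fuel s).
Proof.
elim: fuel s C => [|fuel IH] s C Cop //=.
case: (query s) => [[x y]|] //=.
destruct excluded_middle_informative as [found|none]; last by case: none; exists op.
by rewrite /= IH.
Qed.

(* Every labeled node has a child, since the restricted class stays nonempty. *)
Lemma strategy_tree_wf fuel s C : (exists op, C op) -> qwf (strategy_tree fuel s C).
Proof.
elim: fuel s C => [|fuel IH] s C [op Cop] //=.
case: (query s) => [[x y]|] //=; split.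
  exists (op x y); destruct excluded_middle_informative as [found|none] => //.
  by case: none; exists op.
move=> a; destruct excluded_middle_informative as [[op' C'op']|none] => //.
by apply: IH; exists op'.
Qed.

Lemma strategy_tree_leaf fuel s C p : (exists op, C op) ->
  is_leaf_path (strategy_tree fuel s C) p -> exists2 op, C op & transcript op fuel s = p.
Proof.
elim: fuel s C p => [|fuel IH] s C p [op Cop] /=.
  by case: p => // _; exists op.
case: (query s) => [[x y]|] /=; last by case: p => // _; exists op.
case: p => // a p; destruct excluded_middle_informative as [[op1 C'op1]|] => // leaf.
have [|op2 [Cop2 <-] <-] := IH _ _ p _ leaf; first by exists op1.
by exists op2.
Qed.

Lemma size_transcript op fuel s : size (transcript op fuel s) <= fuel.
Proof.
elim: fuel s => [|fuel IH] s //=.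
by case: (query s) => [[x y]|] //=; rewrite ltnS.
Qed.

Theorem strategy_tree_solves (X : (S -> S -> S) -> Prop) fuel s0 :
  (exists op, X op) ->
  (forall op1 op2, X op1 -> X op2 ->
     transcript op1 fuel s0 = transcript op2 fuel s0 -> op1 =2 op2) ->
  solves_product_recovering X (strategy_tree fuel s0 X) /\
  forall op, X op -> forall p, follow (strategy_tree fuel s0 X) op = Some p -> size p <= fuel.
Proof.
move=> nonempty separates; split; last first.
  by move=> op Xop p; rewrite follow_strategy_tree // => -[<-]; apply: size_transcript.
split; first exact: strategy_tree_wf.
split; first by move=> op Xop; exists (transcript op fuel s0); apply: follow_strategy_tree.
split.
  move=> op1 op2 p X1 X2; rewrite !follow_strategy_tree // => -[<-] [E].
  exact: separates.
move=> p /(strategy_tree_leaf nonempty) [op Xop <-].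
by exists op; rewrite ?follow_strategy_tree.
Qed.

End QueryStrategy.

Section PhaseMachine.
Variable S : finType.

(* The states of the strategy.  [Cyclic L x c]: L = {x, ..., c} lists the
   powers of x computed so far, c the last one.  [Coset L H e y c R]: H is a
   subgroup with unit e, L is H, yH, ..., y^(i-1)H together with the part
   {h c | h in H, h not in R} of the coset of c = y^i, and R lists the h whose
   product h * c is still to be queried. *)
Inductive phase : Type :=
| Cyclic of {set S} & S & S
| Coset of {set S} & {set S} & S & S & S & seq S.

Definition known (p : phase) : {set S} :=
  match p with Cyclic L _ _ | Coset L _ _ _ _ _ => L end.

(* L is a subgroup with unit e: start enumerating the cosets of a new
   generator y, or stop if L is everything. *)
Definition start_coset (L : {set S}) (e : S) : option phase :=
  if [pick y | y \notin L] is Some y then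
    Some (Coset (y |: L) L e y y (enum (L :\ e)))
  else None.

Definition initial_phase : option phase :=
  if [pick x : S] is Some x then Some (Cyclic [set x] x x) else None.

Definition next_query (s : option phase) : option (S * S) :=
  match s with
  | None => None
  | Some (Cyclic _ x c) => Some (x, c)
  | Some (Coset _ _ _ _ c (h :: _)) => Some (h, c)
  | Some (Coset _ _ _ y c [::]) => Some (y, c)
  end.

Definition next_phase (s : option phase) (z : S) : option phase :=
  match s with
  | None => None
  | Some (Cyclic L x c) =>
      if z \notin L then Some (Cyclic (z |: L) x z) else start_coset L c
  | Some (Coset L H e y c (_ :: R)) => Some (Coset (z |: L) H e y c R)
  | Some (Coset L H e y c [::]) =>
      if z \notin L then Some (Coset (z |: L) H e y z (enum (H :\ e)))
      else start_coset L e
  end.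

(* The known set strictly grows from a state to the next; this bounds the
   number of queries. *)
Definition grows (s s' : option phase) : Prop :=
  forall p p', s = Some p -> s' = Some p' -> #|known p| < #|known p'|.

End PhaseMachine.

Arguments next_query {S} s.
Arguments next_phase {S} s z.

Section AbelianGroup.
Variables (S : finType) (op : S -> S -> S) (e : S).
Hypotheses (opA : associative op) (opC : commutative op) (op1x : left_id e op)
  (opV : forall x, exists y, op y x = e).

Lemma opx1 : right_id e op.
Proof. by move=> x; rewrite opC op1x. Qed.

Lemma op_cancel a : injective (op a).
Proof.
move=> b c E; have [u uaE] := opV a.
by rewrite -(op1x b) -(op1x c) -uaE -!opA E.
Qed.

(* A subset containing e and closed under op is a subgroup: it contains the
   inverses of its elements, as translation by a is a bijection of H. *)
Lemma closed_subset_inv (H : {set S}) :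
  (forall a b, a \in H -> b \in H -> op a b \in H) ->
  forall a, a \in H -> e \in H -> exists2 b, b \in H & op b a = e.
Proof.
move=> closedH a aH eH.
have sub : [set op a z | z in H] \subset H.
  by apply/subsetP => w /imsetP [z zH ->]; apply: closedH.
have card_img : #|[set op a z | z in H]| = #|H|.
  by apply: card_in_imset => u v _ _; apply: op_cancel.
have imgE : [set op a z | z in H] = H by apply/eqP; rewrite eqEcard sub card_img leqnn.
move: eH; rewrite -{1}imgE => /imsetP [z zH zE].
by exists z => //; rewrite opC zE.
Qed.

Definition pow (y : S) (j : nat) : S := iter j (op y) e.

Lemma powS y j : pow y j.+1 = op y (pow y j).
Proof. by []. Qed.

Lemma pow0 y : pow y 0 = e.
Proof. by []. Qed.

Lemma pow1 y : pow y 1 = y.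
Proof. by rewrite powS opx1. Qed.

Section SecondOperation.
Variables (op' : S -> S -> S) (e' : S).
Hypotheses (opA' : associative op') (opC' : commutative op') (op1x' : left_id e' op')
  (opV' : forall x, exists y, op' y x = e').

Lemma unit_shared z : op' z e = z -> left_id e op'.
Proof.
move=> zeE; have [u uzE] := opV' z.
have ee' : e = e' by rewrite -{1}(op1x' e) -uzE -opA' zeE.
by move=> x; rewrite ee' op1x'.
Qed.

Definition agrees_on (L : {set S}) (g : S) : Prop :=
  forall z, z \in L -> op g z \in L /\ op' g z = op g z.

Definition agree_closed (L : {set S}) : Prop := forall a, a \in L -> agrees_on L a.

Lemma agree_closed_unit (L : {set S}) : e \in L -> agree_closed L -> left_id e op'.
Proof. by move=> eL clL; apply: (@unit_shared e); have [_ ->] := clL e eL e eL. Qed.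

Lemma agrees_on_op (L : {set S}) g1 g2 : agrees_on L g1 -> agrees_on L g2 -> g2 \in L ->
  agrees_on L (op g1 g2) /\ op g1 g2 \in L.
Proof.
move=> ag1 ag2 g2L; have [g12L g12E] := ag1 _ g2L; split => // z zL.
have [g2zL g2zE] := ag2 _ zL; have [g12zL g12zE] := ag1 _ g2zL.
by rewrite -opA; split => //; rewrite -g12E -opA' g2zE g12zE.
Qed.

Lemma agree_closed_of_span (L : {set S}) y (G : {set S}) :
  e \in L -> left_id e op' -> agrees_on L y -> (forall h, h \in G -> agrees_on L h) ->
  (forall a, a \in L -> exists h j, h \in G /\ a = op h (pow y j)) -> agree_closed L.
Proof.
move=> eL op'1x agy agG span.
have agpow j : agrees_on L (pow y j) /\ pow y j \in L.
  elim: j => [|j [agj jL]]; last by rewrite powS; apply: agrees_on_op.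
  by split => // z zL; rewrite pow0 op1x op'1x.
move=> a /span [h [j [hG ->]]].
by have [] := agrees_on_op (agG h hG) (agpow j).1 (agpow j).2.
Qed.

Record cyclic_inv (L : {set S}) (x c : S) (i : nat) : Prop := CyclicInv {
  cyc_pos : 0 < i;
  cyc_cur : c = pow x i;
  cyc_mem : forall z, z \in L <-> exists2 j, 0 < j <= i & z = pow x j;
  cyc_agree : forall j, 0 < j < i -> op' x (pow x j) = pow x j.+1;
  cyc_fresh : forall j, 0 < j < i -> pow x j != pow x i }.

Lemma cyclic_init x : cyclic_inv [set x] x x 1.
Proof.
split => //; first by rewrite pow1.
- move=> z; rewrite inE; split => [/eqP ->|[[|[|j]] // _ ->]]; last by rewrite pow1.
  by exists 1; rewrite ?pow1.
- by move=> [|[|j]].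
- by move=> [|[|j]].
Qed.

Lemma cyclic_extend L x c i : cyclic_inv L x c i -> op x c \notin L -> op' x c = op x c ->
  cyclic_inv (op x c |: L) x (op x c) i.+1.
Proof.
case=> i0 cE memL agr fresh xcL xcE.
have xcpow : op x c = pow x i.+1 by rewrite cE.
split => //.
- move=> z; rewrite in_setU1; split.
    case/orP => [/eqP ->|/memL [j /andP [j0 ji] ->]]; first by exists i.+1; rewrite ?leqnn ?xcpow.
    by exists j; rewrite ?j0 ?leqW.
  case=> j /andP [j0]; rewrite leq_eqVlt ltnS => /orP [/eqP ->|ji] ->.
    by rewrite -xcpow eqxx.
  by apply/orP; right; apply/memL; exists j; rewrite ?j0.
- move=> j /andP [j0]; rewrite ltnS leq_eqVlt => /orP [/eqP ->|ji].
    by rewrite -cE xcE.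
  by apply: agr; rewrite j0.
- move=> j /andP [j0 ji]; rewrite -xcpow; apply: contraNneq xcL => <-.
  by apply/memL; exists j; rewrite ?j0.
Qed.

(* A power x * c already in L is x itself, so c = e and L = <x>, a subgroup
   on which op' coincides with op. *)
Lemma cyclic_close L x c i : cyclic_inv L x c i -> op x c \in L -> op' x c = op x c ->
  [/\ c = e, e \in L & agree_closed L].
Proof.
case=> i0 cE memL agr fresh /memL [j /andP [j0 ji] xcE] xcE'.
have ce : c = e.
  case: j j0 ji xcE => [//|[|j]] _ ji xcE.
    by apply: (@op_cancel x); rewrite xcE pow1 opx1.
  by case/negP: (fresh j.+1 ji); apply/eqP; apply: (@op_cancel x); rewrite -cE xcE.
have eL : e \in L by rewrite -ce cE; apply/memL; exists i; rewrite ?i0 ?leqnn.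
have agx : agrees_on L x.
  move=> z /memL [k /andP [k0 ki] ->]; case: (ltnP k i) => [ki'|ik].
    by split; [apply/memL; exists k.+1 | rewrite agr ?k0].
  have -> : k = i by apply/eqP; rewrite eqn_leq ki ik.
  rewrite -cE xcE' ce opx1; split => //.
  by apply/memL; exists 1; rewrite ?pow1.
have op'1x : left_id e op' by apply: (@unit_shared x); rewrite (agx e eL).2 opx1.
split => //; apply: (@agree_closed_of_span L x [set e]) => //.
  by move=> h /set1P -> z zL; rewrite op1x op'1x.
by move=> a /memL [k _ ->]; exists e, k; rewrite set11 op1x.
Qed.

(* The products h * y^j already enumerated in the coset phase: all full
   cosets j < i, and the part of the coset of y^i outside the pending list R. *)
Definition listed (R : seq S) (i : nat) (h : S) (j : nat) : bool :=
  (j < i) || (j == i) && (h \notin R).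

Lemma listed_nil i h j : listed [::] i h j = (j <= i).
Proof. by rewrite /listed andbT orbC -leq_eqVlt. Qed.

Lemma listed_cons h0 R i h j : h0 \notin R ->
  listed R i h j = listed (h0 :: R) i h j || (h == h0) && (j == i).
Proof.
move=> h0R; rewrite /listed inE negb_or.
case: (j < i) => //=; case: (j == i) => //=; rewrite ?andbF //.
by case: eqP => [->|_]; rewrite ?h0R ?orbF.
Qed.

Lemma listed_restart (H : {set S}) i h j : h \in H ->
  listed (enum (H :\ e)) i.+1 h j = listed [::] i h j || (h == e) && (j == i.+1).
Proof.
by move=> hH; rewrite listed_nil /listed mem_enum in_setD1 hH andbT negbK ltnS andbC.
Qed.

Record coset_inv (L H : {set S}) (y c : S) (R : seq S) (i : nat) : Prop := CosetInv {
  cos_unit : e \in H;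
  cos_base : agree_closed H;
  cos_uniq : uniq R;
  cos_pending : {subset R <= H :\ e};
  cos_cur : c = pow y i;
  cos_mem : forall z, z \in L <->
    exists h j, [/\ h \in H, listed R i h j & z = op h (pow y j)];
  cos_agree : forall h j, h \in H -> listed R i h j -> op' h (pow y j) = op h (pow y j);
  cos_step : forall j, j < i -> op' y (pow y j) = pow y j.+1;
  cos_fresh : forall h j, h \in H -> j < i -> pow y i != op h (pow y j) }.

Lemma coset_start (L : {set S}) y : e \in L -> agree_closed L -> y \notin L ->
  coset_inv (y |: L) L y y (enum (L :\ e)) 1.
Proof.
move=> eL clL yL; have op'1x := agree_closed_unit eL clL.
apply: CosetInv => //.
- exact: enum_uniq.
- by move=> h; rewrite mem_enum.
- by rewrite pow1.
- move=> z; rewrite in_setU1; split.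
    case/orP => [/eqP ->|zL].
      by exists e, 1; rewrite listed_restart // !eqxx orbT pow1 op1x.
    by exists z, 0; rewrite listed_restart // pow0 opx1.
  case=> h [j [hL]]; rewrite listed_restart // listed_nil leqn0.
  case/orP => [/eqP ->|/andP [/eqP -> /eqP ->]] ->; first by rewrite pow0 opx1 hL orbT.
  by rewrite op1x pow1 eqxx.
- move=> h j hL; rewrite listed_restart // listed_nil leqn0.
  case/orP => [/eqP ->|/andP [/eqP -> /eqP ->]]; last by rewrite op'1x op1x.
  by rewrite pow0 opC' op'1x opx1.
- by move=> [|//] _; rewrite pow0 pow1 opC' op'1x.
- move=> h [|//] hL _; rewrite pow0 pow1 opx1.
  by apply: contraNneq yL => ->.
Qed.

(* The product h * c with h pending is new (the cosets are distinct and
   translation by h is injective), and it is enumerated. *)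
Lemma coset_fill L H y c h R i : coset_inv L H y c (h :: R) i -> op' h c = op h c ->
  op h c \notin L /\ coset_inv (op h c |: L) H y c R i.
Proof.
case=> eH clH /= /andP [hR uR] pend cE memL agr step fresh hcE.
have /setD1P [_ hH] := pend h (mem_head _ _).
have listedE h' j : listed R i h' j = listed (h :: R) i h' j || (h' == h) && (j == i).
  exact: listed_cons.
have hcL : op h c \notin L.
  apply/negP => /memL [h' [j [h'H]]]; rewrite /listed => /orP [ji|/andP [/eqP ji h'R]] E.
    have [u uH uhE] := closed_subset_inv (fun a b aH bH => (clH a aH b bH).1) hH eH.
    case/negP: (fresh _ _ (clH u uH h' h'H).1 ji); apply/eqP.
    by rewrite -cE -opA -E opA uhE op1x.
  subst j; have hh' : h = h' by apply: (@op_cancel c); rewrite opC E cE opC.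
  by move: h'R; rewrite -hh' mem_head.
split => //; apply: CosetInv => //.
- by move=> h' h'R; apply: pend; rewrite inE h'R orbT.
- move=> z; rewrite in_setU1; split.
    case/orP => [/eqP ->|/memL [h' [j [h'H lst ->]]]].
      by exists h, i; rewrite listedE !eqxx orbT -cE.
    by exists h', j; rewrite listedE lst.
  case=> h' [j [h'H]]; rewrite listedE => /orP [lst|/andP [/eqP -> /eqP ->]] ->.
    by apply/orP; right; apply/memL; exists h', j.
  by rewrite -cE eqxx.
- move=> h' j h'H; rewrite listedE => /orP [lst|/andP [/eqP -> /eqP ->]].
    exact: agr.
  by rewrite -cE.
Qed.

Lemma coset_extend L H y c i : coset_inv L H y c [::] i -> op y c \notin L ->
  op' y c = op y c -> coset_inv (op y c |: L) H y (op y c) (enum (H :\ e)) i.+1.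
Proof.
case=> eH clH _ _ cE memL agr step fresh ycL ycE.
have op'1x := agree_closed_unit eH clH.
have ycpow : op y c = pow y i.+1 by rewrite cE.
apply: CosetInv => //.
- exact: enum_uniq.
- by move=> h; rewrite mem_enum.
- move=> z; rewrite in_setU1; split.
    case/orP => [/eqP ->|/memL [h [j [hH lst ->]]]].
      by exists e, i.+1; rewrite listed_restart // !eqxx orbT op1x ycpow.
    by exists h, j; rewrite listed_restart // lst.
  case=> h [j [hH]]; rewrite listed_restart // => /orP [lst|/andP [/eqP -> /eqP ->]] ->.
    by apply/orP; right; apply/memL; exists h, j.
  by rewrite op1x ycpow eqxx.
- move=> h j hH; rewrite listed_restart // => /orP [lst|/andP [/eqP -> /eqP ->]].
    exact: agr.
  by rewrite op'1x op1x.
- move=> j; rewrite ltnS leq_eqVlt => /orP [/eqP ->|ji]; last exact: step.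
  by rewrite -cE ycE ycpow.
- move=> h j hH ji; rewrite -ycpow; apply: contraNneq ycL => ->.
  by apply/memL; exists h, j; rewrite listed_nil -ltnS.
Qed.

(* When the coset of c = y^i is complete, a known power y * c lies in H, as
   the cosets H, ..., y^iH are distinct. *)
Lemma coset_returns L H y c i : coset_inv L H y c [::] i -> op y c \in L -> op y c \in H.
Proof.
case=> _ _ _ _ cE memL _ _ fresh /memL [h [[|j] [hH]]]; rewrite listed_nil => ji E.
  by rewrite E pow0 opx1.
case/negP: (fresh h j hH ji); apply/eqP; apply: (@op_cancel y).
by rewrite -cE E powS !opA (opC h).
Qed.

Lemma coset_close L H y c i : coset_inv L H y c [::] i -> op y c \in L ->
  op' y c = op y c -> e \in L /\ agree_closed L.
Proof.
move=> inv ycL ycE; have ycH := coset_returns inv ycL.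
case: inv => eH clH _ _ cE memL agr step _.
have op'1x := agree_closed_unit eH clH.
have memL' z : z \in L <-> exists h j, [/\ h \in H, j <= i & z = op h (pow y j)].
  split; first by case/memL => h [j [hH]]; rewrite listed_nil; exists h, j.
  by case=> h [j [hH ji zE]]; apply/memL; exists h, j; rewrite listed_nil.
have agrH h j : h \in H -> j <= i -> op' h (pow y j) = op h (pow y j).
  by move=> hH ji; apply: agr; rewrite ?listed_nil.
have HL h : h \in H -> h \in L.
  by move=> hH; apply/memL'; exists h, 0; rewrite pow0 opx1.
have agH h : h \in H -> agrees_on L h.
  move=> hH z /memL' [h' [j [h'H ji ->]]].
  have [hh'H hh'E] := clH h hH h' h'H.
  split; first by rewrite opA; apply/memL'; exists (op h h'), j.
  transitivity (op' h (op' h' (pow y j))); first by rewrite agrH.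
  by rewrite opA' hh'E agrH // opA.
have agy : agrees_on L y.
  move=> z /memL' [h [j [hH ji ->]]]; rewrite opA (opC y) -opA -powS.
  case: (ltnP j i) => [ji'|ij].
    split; first by apply/memL'; exists h, j.+1.
    transitivity (op' y (op' h (pow y j))); first by rewrite agrH.
    by rewrite opA' (opC' y) -opA' step // agrH.
  have jE : j = i by apply/eqP; rewrite eqn_leq ji ij.
  subst j; rewrite powS -cE; have [hycH hycE] := clH h hH _ ycH.
  split; first exact: HL.
  transitivity (op' y (op' h c)); first by rewrite cE agrH.
  by rewrite opA' (opC' y) -opA' ycE hycE.
split; first exact: HL.
apply: (@agree_closed_of_span L y H) => //; first exact: HL.
by move=> a /memL' [h [j [hH _ ->]]]; exists h, j.
Qed.

Definition phase_inv (s : option (phase S)) : Prop :=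
  match s with
  | None => op =2 op'
  | Some (Cyclic L x c) => exists i, cyclic_inv L x c i
  | Some (Coset L H e0 y c R) => e0 = e /\ exists i, coset_inv L H y c R i
  end.

Lemma start_coset_inv (L : {set S}) : e \in L -> agree_closed L ->
  phase_inv (start_coset L e) /\ forall p, start_coset L e = Some p -> #|L| < #|known p|.
Proof.
move=> eL clL; rewrite /start_coset; case: pickP => [y /= yL|none].
  split; first by split => //; exists 1; apply: coset_start.
  by move=> _ [<-] /=; rewrite cardsU1 yL.
split => // a b; have inL z : z \in L by move: (none z) => /= /negbFE.
by have [_ ->] := clL a (inL a) b (inL b).
Qed.

Lemma phase_step s a b : phase_inv s -> next_query s = Some (a, b) ->
  op' a b = op a b ->
  phase_inv (next_phase s (op a b)) /\ grows s (next_phase s (op a b)).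
Proof.
case: s => [[L x c|L H e0 y c [|h R]]|] //=.
- case=> i inv [<- <-] abE; case: ifPn => zL.
    split; first by exists i.+1; apply: cyclic_extend.
    by move=> _ _ [<-] [<-] /=; rewrite cardsU1 zL.
  have [-> eL clL] := cyclic_close inv (negbNE zL) abE.
  have [inv' grow] := start_coset_inv eL clL.
  by split => // _ p' [<-]; apply: grow.
- case=> -> [i inv] [<- <-] abE; case: ifPn => zL.
    split; first by split => //; exists i.+1; apply: coset_extend.
    by move=> _ _ [<-] [<-] /=; rewrite cardsU1 zL.
  have [eL clL] := coset_close inv (negbNE zL) abE.
  have [inv' grow] := start_coset_inv eL clL.
  by split => // _ p' [<-]; apply: grow.
- case=> -> [i inv] [<- <-] abE.
  have [hcL inv'] := coset_fill inv abE.
  split; first by split => //; exists i.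
  by move=> _ _ [<-] [<-] /=; rewrite cardsU1 hcL.
Qed.

Lemma transcript_separates fuel s : phase_inv s ->
  (forall p, s = Some p -> #|S| < #|known p| + fuel) ->
  transcript next_query next_phase op fuel s =
  transcript next_query next_phase op' fuel s -> op =2 op'.
Proof.
elim: fuel s => [|fuel IH] s inv budget.
  case: s inv budget => [p|] // _ /(_ p erefl).
  by rewrite addn0 ltnNge max_card.
case: s inv budget => [p|] // inv budget.
have [[a b] qE] : exists q, next_query (Some p) = Some q.
  by case: p {inv budget} => [L x c|L H e0 y c [|h R]]; eexists.
rewrite !(transcript_cons _ _ _ qE) => -[abE tE].
have [inv' grow] := phase_step inv qE (esym abE).
apply: IH inv' _ _; last by rewrite -abE in tE.
move=> p' p'E; have := budget p erefl; rewrite addnS ltnS => le_p.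
by apply: leq_ltn_trans le_p _; rewrite ltn_add2r; apply: grow p'E.
Qed.

Lemma initial_phase_inv : phase_inv (initial_phase S) /\
  forall p, initial_phase S = Some p -> #|S| < #|known p| + #|S|.
Proof.
rewrite /initial_phase; case: pickP => [x _|none]; last by split => // a; have := none a.
by split; [exists 1; apply: cyclic_init | move=> _ [<-]; rewrite cards1 add1n].
Qed.

Theorem abelian_transcript_separates :
  transcript next_query next_phase op #|S| (initial_phase S) =
  transcript next_query next_phase op' #|S| (initial_phase S) -> op =2 op'.
Proof. by have [inv budget] := initial_phase_inv; apply: transcript_separates. Qed.

End SecondOperation.
End AbelianGroup.

(* The cyclic group of order |S| transported to S: the class of abelian group
   operations on a nonempty S is nonempty. *)
Section CyclicGroup.
Variable S : finType.
Hypothesis S_nonempty : 0 < #|S|.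

Definition add_rank (a b : S) : S :=
  enum_val (Ordinal (ltn_pmod (enum_rank a + enum_rank b) S_nonempty)).

Lemma add_rankE a b : val (enum_rank (add_rank a b)) = (enum_rank a + enum_rank b) %% #|S|.
Proof. by rewrite /add_rank enum_valK. Qed.

Lemma abelian_group_exists : exists op : S -> S -> S, is_abelian_group op.
Proof.
exists add_rank; split; [|split].
- move=> a b c; apply: enum_rank_inj; apply: val_inj.
  by rewrite !add_rankE modnDmr modnDml addnA.
- by move=> a b; apply: enum_rank_inj; apply: val_inj; rewrite !add_rankE addnC.
exists (enum_val (Ordinal S_nonempty)); split.
  move=> b; apply: enum_rank_inj; apply: val_inj.
  by rewrite add_rankE enum_valK /= add0n modn_small.
move=> b; exists (enum_val (Ordinal (ltn_pmod (#|S| - enum_rank b) S_nonempty))).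
apply: enum_rank_inj; apply: val_inj.
by rewrite add_rankE !enum_valK /= modnDml subnK ?modnn // ltnW.
Qed.

End CyclicGroup.

Theorem mainTheorem5 (S : finType) (n : nat) (hn : #|S| = n) (hpos : 0 < n) :
  exists t : qtree S,
    solves_product_recovering (@is_abelian_group S) t /\
    forall op, is_abelian_group op ->
      forall p, follow t op = Some p -> size p <= n.
Proof.
have S_nonempty : 0 < #|S| by rewrite hn.
exists (strategy_tree next_query next_phase n (initial_phase S) (@is_abelian_group S)).
apply: strategy_tree_solves; first exact: abelian_group_exists.
move=> op1 op2 [A1 [C1 [e1 [I1 V1]]]] [A2 [C2 [e2 [I2 V2]]]]; rewrite -hn.
exact: abelian_transcript_separates.
Qed.
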